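(* Let $\theta_1,\theta_2\in\Theta$, $\theta_\alpha=\alpha\theta_1+(1-\alpha)\theta_2$, and assume the maximiser $\alpha^*$ of $\alpha\mapsto D^{\mathrm w}_{B,\alpha}(p_{\theta_1},p_{\theta_2})$ over $[0,1]$ exists, is unique and lies in $(0,1)$. Then \[ D_C^{\mathrm w}(p_{\theta_1},p_{\theta_2})=D^{\mathrm w}_{B,\alpha^*}(p_{\theta_1},p_{\theta_2})=\alpha^*F(\theta_1)+(1-\alpha^* )F(\theta_2)-\hat F(\theta_{\alpha^*}), \] $\theta_{\alpha^*}$ satisfies the bisector condition $B^{\mathrm w}_{\varphi,F}(\theta_1,\theta_{\alpha^*})=B^{\mathrm w}_{\varphi,F}(\theta_2,\theta_{\alpha^*})$, and \[ D_C^{\mathrm w}(p_{\theta_1},p_{\theta_2})=\frac{B^{\mathrm w}_{\varphi,F}(\theta_1,\theta_{\alpha^*})}{E_\varphi(\theta_{\alpha^*})}-\ln E_\varphi(\theta_{\alpha^*})=\frac{B^{\mathrm w}_{\varphi,F}(\theta_2,\theta_{\alpha^*})}{E_\varphi(\theta_{\alpha^*})}-\ln E_\varphi(\theta_{\alpha^*}). \]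
   Context: Let $\mu$ be a $\sigma$-finite measure on $\mathcal X$ and $\varphi\ge0$ a measurable weight. Let $\{p_\theta:\theta\in\Theta\}$, $\Theta\subset\mathbb R^d$ open and convex, be a regular exponential family $p_\theta(x)=\exp\{\theta^{\mathrm T}t(x)-F(\theta)+k(x)\}$. Set $E_\varphi(\theta)=\int\varphi p_\theta\,\mathrm d\mu\in(0,\infty)$ and $\hat F(\theta)=\ln\int\varphi(x)e^{\theta^{\mathrm T}t(x)+k(x)}\,\mathrm d\mu(x)=F(\theta)+\ln E_\varphi(\theta)$, finite and differentiable on $\Theta$. Weighted affinity $\rho^{\mathrm w}_\alpha(p,q)=\int\varphi\,p^\alpha q^{1-\alpha}\,\mathrm d\mu$; $D^{\mathrm w}_{B,\alpha}(p,q)=-\ln\rho^{\mathrm w}_\alpha(p,q)$; $D^{\mathrm w}_C(p,q)=\max_{\alpha\in[0,1]}D^{\mathrm w}_{B,\alpha}(p,q)$. Weighted Bregman divergence: $B^{\mathrm w}_{\varphi,F}(\theta,\theta')=E_\varphi(\theta')\big[F(\theta)-F(\theta')-(\theta-\theta')^{\mathrm T}\nabla\hat F(\theta')\big]$. *)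

From HB Require Import structures.
From mathcomp Require Import all_boot all_order all_algebra.
From mathcomp Require Import all_classical all_reals all_analysis.
Set Implicit Arguments. Unset Strict Implicit. Unset Printing Implicit Defensive.
Import Order.TTheory GRing.Theory Num.Theory.
Import numFieldNormedType.Exports.
Local Open Scope classical_set_scope.
Local Open Scope ring_scope.

Section WeightedExpFam.
Context {R : realType} {d : nat} {dT : measure_display} {T : measurableType dT}.
Variable mu : {measure set T -> \bar R}.

Definition dotv (a b : 'rV[R]_d) : R := \sum_(i < d) a ord0 i * b ord0 i.

Definition logZ (t : T -> 'rV[R]_d) (k : T -> R) (th : 'rV[R]_d) : R :=
  ln (fine (\int[mu]_x (expR (dotv th (t x) + k x))%:E)).

Definition expfam (t : T -> 'rV[R]_d) (k : T -> R) (th : 'rV[R]_d) : T -> R :=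
  fun x => expR (dotv th (t x) - logZ t k th + k x).

Definition Ephi (phi : T -> R) (t : T -> 'rV[R]_d) (k : T -> R)
  (th : 'rV[R]_d) : R :=
  fine (\int[mu]_x (phi x * expfam t k th x)%:E).

Definition logZw (phi : T -> R) (t : T -> 'rV[R]_d) (k : T -> R)
  (th : 'rV[R]_d) : R :=
  ln (fine (\int[mu]_x (phi x * expR (dotv th (t x) + k x))%:E)).

Definition waffinity (phi : T -> R) (alpha : R) (p q : T -> R) : R :=
  fine (\int[mu]_x (phi x * (p x `^ alpha * q x `^ (1 - alpha)))%:E).

Definition wBhatt (phi : T -> R) (alpha : R) (p q : T -> R) : R :=
  - ln (waffinity phi alpha p q).

Definition wChernoff (phi : T -> R) (p q : T -> R) : R :=
  sup [set wBhatt phi a p q | a in [set a : R | 0 <= a <= 1]].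

Definition wBregman (phi : T -> R) (t : T -> 'rV[R]_d) (k : T -> R)
  (th th' : 'rV[R]_d) : R :=
  Ephi phi t k th' *
  (logZ t k th - logZ t k th' - ('d (logZw phi t k) th' : 'rV[R]_d -> R) (th - th')).

End WeightedExpFam.

From HB Require Import structures.
From mathcomp Require Import all_boot all_order all_algebra.
From mathcomp Require Import all_classical all_reals all_analysis.
From mathcomp Require Import measurable_realfun.
From mathcomp Require Import ring.
Set Implicit Arguments.
Unset Strict Implicit.
Unset Printing Implicit Defensive.
Import Order.TTheory GRing.Theory Num.Theory.
Import numFieldNormedType.Exports.
Local Open Scope classical_set_scope.
Local Open Scope ring_scope.

(** For an exponential family [p_1^a p_2^(1-a)] is, up to the constant factor
   [exp(-a F(th1) - (1-a) F(th2))], the unnormalised density at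
   [th_a = a th1 + (1-a) th2], so [D_{B,a} = a F(th1) + (1-a) F(th2) - hatF(th_a)].
   At the interior maximiser [a_*] the derivative in [a] vanishes, i.e.
   [grad hatF(th_{a_*})^T (th1 - th2) = F(th1) - F(th2)].  With this, both Bregman
   divergences reduce to [E_phi(th_{a_*}) (D_C + hatF(th_{a_*}) - F(th_{a_*}))],
   and [ln E_phi = hatF - F] turns this into the stated formulas. *)

Section RealAnalysis.
Variable R : realType.

Lemma sup_image_argmax (U : Type) (f : U -> R) (A : set U) (a : U) :
  A a -> (forall b, A b -> f b <= f a) -> sup (f @` A) = f a.
Proof.
move=> Aa fmax; apply/le_anti/andP; split.
  by apply: ge_sup; [exists (f a), a | move=> _ [b Ab <-]; exact: fmax].
apply: sup_upper_bound; last by exists a.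
by split; [exists (f a), a | exists (f a) => _ [b Ab <-]; exact: fmax].
Qed.

Lemma expR_powR_comb (u v a : R) :
  expR u `^ a * expR v `^ (1 - a) = expR (a * u + (1 - a) * v).
Proof. by rewrite -(expRM u) -(expRM v) -expRD mulrC (mulrC v). Qed.

Lemma is_derive_along_line (V W : normedModType R) (f : V -> W) (x v : V) (s : R) :
  differentiable f (s *: v + x) ->
  is_derive s 1 (fun a : R => f (a *: v + x)) ('d f (s *: v + x) v).
Proof.
move=> df; rewrite -deriveE //.
have quotE : (fun h : R => h^-1 *: ((fun a => f (a *: v + x)) (h *: 1 + s)
                                     - f (s *: v + x)))
           = (fun h : R => h^-1 *: (f (h *: v + (s *: v + x)) - f (s *: v + x))).
  by apply/funext => h; rewrite [h *: 1]mulr1 scalerDl addrA.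
have lineD : derivable f (s *: v + x) v by exact: diff_derivable.
apply: DeriveDef; first by rewrite /derivable /= quotE.
by rewrite /derive /= quotE.
Qed.

Lemma segment_interior_max_diff (V : normedModType R) (f : V -> R) (x y : V)
    (c1 c2 a : R) :
  0 < a < 1 ->
  (forall b, 0 < b < 1 -> differentiable f (b *: x + (1 - b) *: y)) ->
  (forall b, 0 < b < 1 ->
     b * c1 + (1 - b) * c2 - f (b *: x + (1 - b) *: y)
     <= a * c1 + (1 - a) * c2 - f (a *: x + (1 - a) *: y)) ->
  'd f (a *: x + (1 - a) *: y) (x - y) = c1 - c2.
Proof.
move=> a01 fdiff amax.
have segE (b : R) : b *: x + (1 - b) *: y = b *: (x - y) + y.
  by rewrite scalerBl scale1r scalerBr addrA addrAC.
pose g b := b * c1 + (1 - b) * c2 - f (b *: (x - y) + y).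
have g'E (b : R) : 0 < b < 1 ->
    is_derive b 1 g (c1 - c2 - 'd f (b *: x + (1 - b) *: y) (x - y)).
  move=> b01; rewrite segE; apply: is_deriveB.
    apply: is_derive_eq; rewrite !scaler0 !add0r mul1r.
    by rewrite [c1%:A]mulr1 [c2 *: -1]mulrN1.
  by apply: is_derive_along_line; rewrite -segE; exact: fdiff.
have g'a0 : is_derive a 1 g 0.
  apply: (@derive1_at_max _ g 0 1 a ler01).
  - by move=> b; rewrite in_itv /= => /g'E [].
  - by rewrite in_itv.
  - by move=> b; rewrite in_itv /= /g -!segE => /amax.
have [_ g'aE] := g'E a a01; have [_ g'a0E] := g'a0.
by apply/esym/subr0_eq; rewrite -g'aE.
Qed.

End RealAnalysis.

Section WeightedExponentialFamily.
Context {R : realType} {d : nat} {dT : measure_display} {T : measurableType dT}.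
Variables (mu : {measure set T -> \bar R}) (phi : T -> R).
Variables (t : T -> 'rV[R]_d) (k : T -> R).

Lemma dotv_combl (a b w : 'rV[R]_d) (l m : R) :
  dotv (l *: a + m *: b) w = l * dotv a w + m * dotv b w.
Proof.
rewrite /dotv !mulr_sumr -big_split /=; apply: eq_bigr => i _.
by rewrite !mxE mulrDl !mulrA.
Qed.

Lemma wBregman_along (th th' v : 'rV[R]_d) (c : R) : th - th' = c *: v ->
  wBregman mu phi t k th th' = Ephi mu phi t k th' *
    (logZ mu t k th - logZ mu t k th' - c * 'd (logZw mu phi t k) th' v).
Proof. by move=> thE; rewrite /wBregman thE linearZ. Qed.

Lemma wBregman_segment (th1 th2 : 'rV[R]_d) a :
  let tha := a *: th1 + (1 - a) *: th2 in
  'd (logZw mu phi t k) tha (th1 - th2) = logZ mu t k th1 - logZ mu t k th2 ->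
  let B := Ephi mu phi t k tha *
    (a * logZ mu t k th1 + (1 - a) * logZ mu t k th2 - logZ mu t k tha) in
  wBregman mu phi t k th1 tha = B /\ wBregman mu phi t k th2 tha = B.
Proof.
move=> tha stationary B.
have th1E : th1 - tha = (1 - a) *: (th1 - th2).
  by rewrite /tha; apply/rowP => j; rewrite !mxE; ring.
have th2E : th2 - tha = (- a) *: (th1 - th2).
  by rewrite /tha; apply/rowP => j; rewrite !mxE; ring.
rewrite (wBregman_along th1E) (wBregman_along th2E) stationary /B.
(* Generalising the atoms keeps [ring] from unfolding their definitions. *)
move: (Ephi mu phi t k tha) (logZ mu t k th1) (logZ mu t k th2) (logZ mu t k tha).
by move=> E F1 F2 Fa; split; ring.
Qed.

Hypothesis mphi : measurable_fun setT phi.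
Hypothesis phi_ge0 : forall x, 0 <= phi x.
Hypothesis mt : forall i : 'I_d, measurable_fun setT (fun x => t x ord0 i).
Hypothesis mk : measurable_fun setT k.

Lemma measurable_dotv th : measurable_fun setT (fun x => dotv th (t x)).
Proof.
apply: measurable_sum => i.
by apply: measurable_funM => //; exact: measurable_cst.
Qed.

Definition wpartition (th : 'rV[R]_d) : \bar R :=
  \int[mu]_x (phi x * expR (dotv th (t x) + k x))%:E.

Lemma wpartition_ge0 th : (0 <= wpartition th)%E.
Proof. by apply: integral_ge0 => x _; rewrite lee_fin mulr_ge0 ?expR_ge0. Qed.

Lemma wpartition_shift th c :
  (\int[mu]_x (phi x * expR (dotv th (t x) + k x + c))%:E
   = (expR c)%:E * wpartition th)%E.
Proof.
have mf : measurable_fun setT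
    (fun x => (phi x * expR (dotv th (t x) + k x))%:E : \bar R).
  apply/measurable_EFinP; apply: measurable_funM => //.
  apply: measurableT_comp; first exact: measurable_expR.
  by apply: measurable_funD => //; exact: measurable_dotv.
have f_ge0 x : [set: T] x -> (0 <= (phi x * expR (dotv th (t x) + k x))%:E)%E.
  by move=> _; rewrite lee_fin mulr_ge0 ?expR_ge0.
rewrite -(ge0_integralZl_EFin mu measurableT f_ge0 mf (expR_ge0 c)).
by apply: eq_integral => x _; rewrite -EFinM expRD; congr EFin; ring.
Qed.

Lemma integral_phi_expfam th :
  (\int[mu]_x (phi x * expfam mu t k th x)%:E
   = (expR (- logZ mu t k th))%:E * wpartition th)%E.
Proof.
rewrite -wpartition_shift; apply: eq_integral => x _.
by rewrite /expfam addrAC.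
Qed.

Section PositiveFiniteMass.
Variable th : 'rV[R]_d.
Hypothesis Ephi_gt0 : (0 < \int[mu]_x (phi x * expfam mu t k th x)%:E)%E.
Hypothesis Ephi_fin : (\int[mu]_x (phi x * expfam mu t k th x)%:E < +oo)%E.

Lemma wpartition_fine_gt0 :
  wpartition th = (fine (wpartition th))%:E /\ 0 < fine (wpartition th).
Proof.
move: Ephi_gt0 Ephi_fin (wpartition_ge0 th); rewrite integral_phi_expfam.
case: (wpartition th) => [r| |] //= Egt0.
  by move: Egt0; rewrite -EFinM lte_fin pmulr_rgt0 ?expR_gt0.
by rewrite gt0_muley ?lte_fin ?expR_gt0.
Qed.

Lemma ln_Ephi : ln (Ephi mu phi t k th) = logZw mu phi t k th - logZ mu t k th.
Proof.
have [ZE Zgt0] := wpartition_fine_gt0.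
rewrite /Ephi integral_phi_expfam ZE -EFinM /= lnM ?posrE ?expR_gt0 //.
by rewrite expRK addrC.
Qed.

End PositiveFiniteMass.

Lemma wBhatt_expfam (th1 th2 : 'rV[R]_d) a :
  let tha := a *: th1 + (1 - a) *: th2 in
  (0 < \int[mu]_x (phi x * expfam mu t k tha x)%:E)%E ->
  (\int[mu]_x (phi x * expfam mu t k tha x)%:E < +oo)%E ->
  wBhatt mu phi a (expfam mu t k th1) (expfam mu t k th2)
  = a * logZ mu t k th1 + (1 - a) * logZ mu t k th2 - logZw mu phi t k tha.
Proof.
move=> tha Egt0 Efin; have [ZE Zgt0] := wpartition_fine_gt0 Egt0 Efin.
pose c := - (a * logZ mu t k th1 + (1 - a) * logZ mu t k th2).
have affE : (\int[mu]_x (phi x * (expfam mu t k th1 x `^ a *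
                                  expfam mu t k th2 x `^ (1 - a)))%:E
             = \int[mu]_x (phi x * expR (dotv tha (t x) + k x + c))%:E)%E.
  apply: eq_integral => x _; rewrite /expfam expR_powR_comb /c dotv_combl.
  by congr (_ * expR _)%:E; ring.
rewrite /wBhatt /waffinity affE wpartition_shift ZE -EFinM /=.
by rewrite lnM ?posrE ?expR_gt0 // expRK /c opprD opprK.
Qed.

End WeightedExponentialFamily.

Theorem proposition3p6 (R : realType) (d : nat) (dT : measure_display)
  (T : measurableType dT) (mu : {measure set T -> \bar R})
  (phi : T -> R) (t : T -> 'rV[R]_d) (k : T -> R) (Theta : set 'rV[R]_d)
  (th1 th2 : 'rV[R]_d) (astar : R) :
  sigma_finite setT mu ->
  measurable_fun setT phi -> (forall x, 0 <= phi x) ->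
  (forall i : 'I_d, measurable_fun setT (fun x => t x ord0 i)) ->
  measurable_fun setT k ->
  open Theta ->
  (forall a b (l : R), Theta a -> Theta b -> 0 <= l <= 1 ->
     Theta (l *: a + (1 - l) *: b)) ->
  (* regular exponential family: the normaliser is finite on Theta *)
  (forall th, Theta th ->
     (\int[mu]_x (expR (dotv th (t x) + k x))%:E < +oo)%E) ->
  (* E_phi(theta) in (0, oo) on Theta *)
  (forall th, Theta th ->
     (0 < \int[mu]_x (phi x * expfam mu t k th x)%:E)%E /\
     (\int[mu]_x (phi x * expfam mu t k th x)%:E < +oo)%E) ->
  (* hat F differentiable on Theta *)
  (forall th, Theta th -> differentiable (logZw mu phi t k) th) ->
  Theta th1 -> Theta th2 ->
  (* alpha* is the unique maximiser over [0,1], and lies in (0,1) *)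
  0 < astar < 1 ->
  (forall a, 0 <= a <= 1 ->
     wBhatt mu phi a (expfam mu t k th1) (expfam mu t k th2)
     <= wBhatt mu phi astar (expfam mu t k th1) (expfam mu t k th2)) ->
  (forall a, 0 <= a <= 1 ->
     wBhatt mu phi a (expfam mu t k th1) (expfam mu t k th2)
     = wBhatt mu phi astar (expfam mu t k th1) (expfam mu t k th2) ->
     a = astar) ->
  let tha := astar *: th1 + (1 - astar) *: th2 in
  let DC := wChernoff mu phi (expfam mu t k th1) (expfam mu t k th2) in
  [/\ DC = wBhatt mu phi astar (expfam mu t k th1) (expfam mu t k th2),
      wBhatt mu phi astar (expfam mu t k th1) (expfam mu t k th2)
        = astar * logZ mu t k th1 + (1 - astar) * logZ mu t k th2
          - logZw mu phi t k tha,
      wBregman mu phi t k th1 tha = wBregman mu phi t k th2 tha,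
      DC = wBregman mu phi t k th1 tha / Ephi mu phi t k tha
           - ln (Ephi mu phi t k tha)
    & DC = wBregman mu phi t k th2 tha / Ephi mu phi t k tha
           - ln (Ephi mu phi t k tha)].
Proof.
move=> _ mphi phi_ge0 mt mk _ Theta_convex _ Ephi_pos hatF_diff Th1 Th2
  /andP[a_gt0 a_lt1] amax _ tha DC.
have Tseg a : 0 <= a <= 1 -> Theta (a *: th1 + (1 - a) *: th2).
  by move=> a01; exact: Theta_convex.
have BhattE a : 0 <= a <= 1 ->
    wBhatt mu phi a (expfam mu t k th1) (expfam mu t k th2)
    = a * logZ mu t k th1 + (1 - a) * logZ mu t k th2
      - logZw mu phi t k (a *: th1 + (1 - a) *: th2).
  by move=> /Tseg/Ephi_pos[]; exact: wBhatt_expfam.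
have a01 : 0 <= astar <= 1 by rewrite !ltW.
have DCE : DC = wBhatt mu phi astar (expfam mu t k th1) (expfam mu t k th2).
  exact: sup_image_argmax.
have stationary : 'd (logZw mu phi t k) tha (th1 - th2)
                  = logZ mu t k th1 - logZ mu t k th2.
  apply: segment_interior_max_diff; first by rewrite a_gt0.
    by move=> b /andP[b_gt0 b_lt1]; apply/hatF_diff/Tseg; rewrite !ltW.
  move=> b /andP[b_gt0 b_lt1]; have b01 : 0 <= b <= 1 by rewrite !ltW.
  by rewrite -(BhattE b b01) -(BhattE astar a01); exact: amax.
have [Egt0 Efin] := Ephi_pos _ (Tseg _ a01).
have Ephi_neq0 : Ephi mu phi t k tha != 0.
  by apply/lt0r_neq0/fine_gt0; rewrite Egt0.
have lnE := ln_Ephi mphi phi_ge0 mt mk Egt0 Efin.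
have [B1E B2E] := wBregman_segment stationary.
rewrite DCE (BhattE astar a01) lnE B1E B2E.
split; [by [] | by [] | by [] | | ];
  by rewrite [Ephi _ _ _ _ _ * _]mulrC mulfK // opprB addrA subrK.
Qed.
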